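(* Let $u,u',v\in\mathbb{Z}^2$ with $u<v$ and $u'<v$ (strictly in both coordinates), and let $\lambda\in(0,1)$. Then $\pi(\lambda;u,v)\cap R=\pi(\lambda;u',v)\cap R$, where $R=R_{u+\mathbf{e}_+,v}\cap R_{u'+\mathbf{e}_+,v}$.
   Context: Fix $p\in(0,1)$; bulk weights $(\omega_x)_{x\in\mathbb{Z}^2}$ i.i.d. with $\mathbb{P}(\omega_x=k)=p(1-p)^k$, $k\ge0$. $\mathbf{e}_1=(1,0),\mathbf{e}_2=(0,1),\mathbf{e}_+=(1,1)$; $R_{u,v}=[u_1,v_1]\times[u_2,v_2]$; $H_x=\mathbb{R}\times\{x_2\}$, $V_x=\{x_1\}\times\mathbb{R}$. Directed paths use steps $\mathbf{e}_1,\mathbf{e}_2$; $T(x,y)$ is the maximal weight $\sum_{z\in\gamma}\omega_z$ over directed paths from $x$ to $y$. Boundary weights for $\lambda\in(0,1)$: let $q(\lambda)=\frac{p\lambda+p\sqrt{(1-p)\lambda(1-\lambda)}}{1-p+p\lambda+2\sqrt{(1-p)\lambda(1-\lambda)}}$, $p_V=1-\frac{1-p}{1-q(\lambda)}$. For a base vertex $u_0$, take $(\omega^V_{u_0+j\mathbf{e}_2}(\lambda))_{j\in\mathbb{Z}}$ i.i.d. geometric with parameter $p_V$ independent of the bulk, set $L(u_0)=0$, $L(u_0+j\mathbf{e}_2)-L(u_0+(j-1)\mathbf{e}_2)=\omega^V_{u_0+j\mathbf{e}_2}(\lambda)$, for $x\in u_0+\mathbb{Z}_{>0}\times\mathbb{Z}$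 let $L(x)=\sup_{j\le x_2-(u_0)_2}[L(u_0+j\mathbf{e}_2)+T(u_0+\mathbf{e}_1+j\mathbf{e}_2,x)]$, and $\omega^H_x(\lambda)=L(x)-L(x-\mathbf{e}_1)$, $\omega^V_x(\lambda)=L(x)-L(x-\mathbf{e}_2)$. The law of $(\omega_x,\omega^H_x(\lambda),\omega^V_x(\lambda))$ converges as $u_0=(-m,-m)$, $m\to\infty$, to a law on all of $\mathbb{Z}^2$ whose restriction to each quadrant $u_0+\mathbb{Z}_{\ge0}^2$ agrees with the construction based at $u_0$; we work under this full-plane law. For a directed path $\gamma$ from $x$ to $y$, $T(\lambda;\gamma)=\sum_{z\in\gamma\cap H_x\setminus\{x\}}\omega^H_z(\lambda)+\sum_{z\in\gamma\cap V_x\setminus\{x\}}\omega^V_z(\lambda)+\sum_{z\in\gamma\cap R_{x+\mathbf{e}_+,y}}\omega_z$; $T(\lambda;x,y)$ is the maximum over directed paths from $x$ to $y$; maximizers are $\lambda$-geodesics, and $\pi(\lambda;x,y)$ is the set of vertices on some $\lambda$-geodesic from $x$ to $y$. *)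

From Stdlib Require Import ZArith List Reals.
Import ListNotations.
Open Scope bool_scope.
Open Scope Z_scope.

Definition point : Type := (Z * Z)%type.
Definition padd (a b : point) : point := (fst a + fst b, snd a + snd b).
Definition psub (a b : point) : point := (fst a - fst b, snd a - snd b).
Definition e1 : point := (1, 0).
Definition e2 : point := (0, 1).
Definition eplus : point := (1, 1).

Definition plt (u v : point) : Prop := fst u < fst v /\ snd u < snd v.

Definition in_rect (a b z : point) : Prop :=
  fst a <= fst z <= fst b /\ snd a <= snd z <= snd b.

Fixpoint steps_ok (l : list point) : Prop :=
  match l with
  | a :: ((b :: _) as t) => (b = padd a e1 \/ b = padd a e2) /\ steps_ok t
  | _ => True
  end.

Definition dpath (x y : point) (g : list point) : Prop :=
  hd_error g = Some x /\ last g x = y /\ steps_ok g.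

(** Environment: bulk weights w, boundary weights wH = omega^H(lambda),
    wV = omega^V(lambda). *)

(** Contribution of vertex z to T(lambda; gamma) for a path gamma from x to y:
    omega^H_z on H_x \ {x}, omega^V_z on V_x \ {x}, omega_z on R_{x+e+,y}. *)
Definition lam_wt (w : point -> nat) (wH wV : point -> Z) (x y z : point) : Z :=
  (if (snd z =? snd x) && negb ((fst z =? fst x) && (snd z =? snd x)) then wH z else 0)
  + (if (fst z =? fst x) && negb ((fst z =? fst x) && (snd z =? snd x)) then wV z else 0)
  + (if (fst x + 1 <=? fst z) && (fst z <=? fst y)
        && (snd x + 1 <=? snd z) && (snd z <=? snd y) then Z.of_nat (w z) else 0).

Definition lam_path_weight (w : point -> nat) (wH wV : point -> Z)
  (x y : point) (g : list point) : Z :=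
  fold_right Z.add 0 (map (lam_wt w wH wV x y) g).

Definition lam_geodesic (w : point -> nat) (wH wV : point -> Z)
  (x y : point) (g : list point) : Prop :=
  dpath x y g /\
  forall g', dpath x y g' ->
    lam_path_weight w wH wV x y g' <= lam_path_weight w wH wV x y g.

Definition lam_pi (w : point -> nat) (wH wV : point -> Z) (x y z : point) : Prop :=
  exists g, lam_geodesic w wH wV x y g /\ In z g.

(** Almost-sure structural property of the full-plane law of
    (omega, omega^H(lambda), omega^V(lambda)): there is a (random) potential L
    on Z^2 whose horizontal/vertical increments are omega^H, omega^V and which
    satisfies the last-passage recursion L(x) = omega_x + max(L(x-e1), L(x-e2))
    (this is what the quadrant construction L(x) = sup_j[...] yields at every
    vertex strictly right of the base column, for every base u0). *)
Definition full_plane_env (w : point -> nat) (wH wV : point -> Z) : Prop :=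
  exists L : point -> Z,
    forall x : point,
      wH x = L x - L (psub x e1) /\
      wV x = L x - L (psub x e2) /\
      L x = Z.of_nat (w x) + Z.max (L (psub x e1)) (L (psub x e2)).

From Stdlib Require Import ZArith List Reals Lia.
Import ListNotations.
Open Scope Z_scope.

(** The potential [L] turns the λ-weights into telescoping increments.  A step
    [a -> b] of a path from [x] earns at most [L b - L a]: exactly that on the
    axes [H_x], [V_x] (where the boundary weights are increments of [L]), and
    in the bulk [L b - max (L (b - e1)) (L (b - e2))], so equality holds iff
    [a] is a maximising predecessor of [b].  Since a path built backwards
    through maximising predecessors always exists, [T(λ; x, y) = L y - L x]
    and the λ-geodesics are exactly the paths all of whose steps are tight.
    For [z] strictly inside the quadrant of [x], [z] lies on such a path iff
    [v] can be reached from [z] through maximising predecessors, a condition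
    that does not mention [x]. *)

Section Last.
Variable A : Type.

Lemma last_cons (a b : A) l : last (b :: l) a = last l b.
Proof.
  revert a b; induction l as [|c l IH]; intros a b; [reflexivity|].
  change (last (c :: l) a = last (c :: l) b). now rewrite !IH.
Qed.

Lemma last_app (a : A) l1 l2 : last (l1 ++ l2) a = last l2 (last l1 a).
Proof.
  revert a; induction l1 as [|b l1 IH]; intros a; [reflexivity|].
  simpl app. now rewrite !last_cons.
Qed.

Lemma last_In (a : A) l : In (last l a) (a :: l).
Proof.
  revert a; induction l as [|b l IH]; intros a; [now left|].
  rewrite last_cons. right. apply IH.
Qed.

End Last.

Section Chain.
Variables (A : Type) (R : A -> A -> Prop).

Fixpoint chain (a : A) (l : list A) : Prop :=
  match l with [] => True | b :: t => R a b /\ chain b t end.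

Lemma chain_app a l1 l2 : chain a (l1 ++ l2) <-> chain a l1 /\ chain (last l1 a) l2.
Proof.
  revert a; induction l1 as [|b l1 IH]; intros a; [simpl; tauto|].
  change (R a b /\ chain b (l1 ++ l2) <-> (R a b /\ chain b l1) /\ chain (last (b :: l1) a) l2).
  rewrite last_cons, IH. tauto.
Qed.

Lemma chain_suffix a l1 b l2 : chain a (l1 ++ b :: l2) -> chain b l2.
Proof. intros H. apply chain_app in H as [_ [_ H]]. exact H. Qed.

End Chain.

Arguments chain {A} R a l.

Definition dstep (a b : point) : Prop := b = padd a e1 \/ b = padd a e2.
Definition le2 (a b : point) : Prop := fst a <= fst b /\ snd a <= snd b.

Lemma steps_ok_chain a l : steps_ok (a :: l) <-> chain dstep a l.
Proof.
  revert a; induction l as [|b l IH]; intros a; [simpl; tauto|].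
  change (dstep a b /\ steps_ok (b :: l) <-> dstep a b /\ chain dstep b l).
  now rewrite IH.
Qed.

Lemma dstep_le2 a b : dstep a b -> le2 a b.
Proof. unfold dstep, le2, padd; intros [-> | ->]; simpl; lia. Qed.

Lemma chain_dstep_le2_last a l : chain dstep a l -> le2 a (last l a).
Proof.
  revert a; induction l as [|b l IH]; intros a; [intros _; simpl; unfold le2; lia|].
  intros [Hab Hl]. rewrite last_cons.
  pose proof (dstep_le2 _ _ Hab); pose proof (IH _ Hl); unfold le2 in *; lia.
Qed.

Lemma dpath_cons x y g :
  dpath x y g -> exists l, g = x :: l /\ chain dstep x l /\ last l x = y.
Proof.
  intros (Hhd & Hlast & Hsteps). destruct g as [|x' l]; [discriminate|].
  injection Hhd as ->. exists l.
  rewrite last_cons in Hlast. now rewrite <- steps_ok_chain.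
Qed.

Lemma dpath_of_chain x y l : chain dstep x l -> last l x = y -> dpath x y (x :: l).
Proof.
  intros H <-. split; [reflexivity|]. split; [apply last_cons|].
  now apply steps_ok_chain.
Qed.

Lemma dpath_le2 x y g : dpath x y g -> le2 x y.
Proof.
  intros Hd. destruct (dpath_cons x y g Hd) as (l & _ & Hl & <-).
  exact (chain_dstep_le2_last x l Hl).
Qed.

Lemma lam_wt_self w wH wV x y : lam_wt w wH wV x y x = 0.
Proof.
  unfold lam_wt. rewrite !Z.eqb_refl. simpl.
  replace (fst x + 1 <=? fst x) with false by (symmetry; apply Z.leb_gt; lia).
  reflexivity.
Qed.

Section Potential.
Variables (w : point -> nat) (wH wV L : point -> Z).
Hypothesis HL : forall x,
  wH x = L x - L (psub x e1) /\ wV x = L x - L (psub x e2) /\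
  L x = Z.of_nat (w x) + Z.max (L (psub x e1)) (L (psub x e2)).

Definition max_pred (a b : point) : Prop :=
  L a = Z.max (L (psub b e1)) (L (psub b e2)).

Definition tight (x a b : point) : Prop :=
  fst b = fst x \/ snd b = snd x \/ max_pred a b.

Lemma lam_wt_step x y a b : dstep a b -> le2 x a -> le2 b y ->
  lam_wt w wH wV x y b <= L b - L a /\
  (lam_wt w wH wV x y b = L b - L a <-> tight x a b).
Proof.
  destruct x as [x1 x2], y as [y1 y2], a as [a1 a2], b as [b1 b2].
  intros Hs Hxa Hby. destruct (HL (b1, b2)) as (H1 & H2 & H3).
  unfold tight, max_pred, lam_wt, dstep, le2, padd, psub in *; simpl in *.
  destruct Hs as [Hs | Hs]; injection Hs as -> ->;
  rewrite ?Z.add_0_r, ?Z.sub_0_r, ?Z.add_simpl_r in *;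
  repeat match goal with
  | |- context [Z.eqb ?p ?q] => destruct (Z.eqb_spec p q)
  | |- context [Z.leb ?p ?q] => destruct (Z.leb_spec p q) end; simpl;
  split; try split; intros; lia.
Qed.

Lemma lam_path_weight_cons x y b l :
  lam_path_weight w wH wV x y (b :: l) =
  lam_wt w wH wV x y b + lam_path_weight w wH wV x y l.
Proof. reflexivity. Qed.

Lemma lam_path_weight_le x y a l :
  chain dstep a l -> le2 x a -> le2 (last l a) y ->
  lam_path_weight w wH wV x y l <= L (last l a) - L a.
Proof.
  revert a; induction l as [|b l IH]; intros a Hl Hxa Hy;
    [unfold lam_path_weight; simpl; lia|].
  destruct Hl as [Hab Hl]. rewrite last_cons in *. rewrite lam_path_weight_cons.
  pose proof (dstep_le2 a b Hab); pose proof (chain_dstep_le2_last b l Hl).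
  assert (Hxb : le2 x b) by (unfold le2 in *; lia).
  assert (Hby : le2 b y) by (unfold le2 in *; lia).
  destruct (lam_wt_step x y a b Hab Hxa Hby) as [Hstep _].
  specialize (IH b Hl Hxb Hy). lia.
Qed.

Lemma lam_path_weight_eq_iff x y a l :
  chain dstep a l -> le2 x a -> le2 (last l a) y ->
  (lam_path_weight w wH wV x y l = L (last l a) - L a <-> chain (tight x) a l).
Proof.
  revert a; induction l as [|b l IH]; intros a Hl Hxa Hy;
    [unfold lam_path_weight; simpl; split; auto; lia|].
  destruct Hl as [Hab Hl]. rewrite last_cons in *. rewrite lam_path_weight_cons.
  pose proof (dstep_le2 a b Hab); pose proof (chain_dstep_le2_last b l Hl).
  assert (Hxb : le2 x b) by (unfold le2 in *; lia).
  assert (Hby : le2 b y) by (unfold le2 in *; lia).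
  destruct (lam_wt_step x y a b Hab Hxa Hby) as [Hstep Hstep_eq].
  pose proof (lam_path_weight_le x y b l Hl Hxb Hy) as Htail.
  specialize (IH b Hl Hxb Hy).
  change (chain (tight x) a (b :: l)) with (tight x a b /\ chain (tight x) b l).
  rewrite <- Hstep_eq, <- IH. lia.
Qed.

Lemma tight_pred_exists x z :
  le2 x z -> z <> x -> exists p, le2 x p /\ dstep p z /\ tight x p z.
Proof.
  destruct x as [x1 x2], z as [z1 z2]; unfold le2, dstep, tight, max_pred, padd, psub.
  simpl. rewrite !Z.sub_0_r. intros Hxz Hzx.
  destruct (Z.eq_dec z1 x1) as [E1 | E1]; [|destruct (Z.eq_dec z2 x2) as [E2 | E2]].
  - assert (z2 <> x2) by (intros ->; subst; auto).
    exists (z1, z2 - 1). simpl. split; [lia|]. split; [right; f_equal; lia|]. auto.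
  - exists (z1 - 1, z2). simpl. split; [lia|]. split; [left; f_equal; lia|]. auto.
  - destruct (Z.max_spec (L (z1 - 1, z2)) (L (z1, z2 - 1))) as [[_ Hmax] | [_ Hmax]].
    + exists (z1, z2 - 1). simpl. split; [lia|]. split; [right; f_equal; lia|]. auto.
    + exists (z1 - 1, z2). simpl. split; [lia|]. split; [left; f_equal; lia|]. auto.
Qed.

Lemma tight_path_exists x z :
  le2 x z -> exists l, chain dstep x l /\ chain (tight x) x l /\ last l x = z.
Proof.
  intros Hxz.
  enough (H : forall n z, le2 x z ->
    (fst z - fst x) + (snd z - snd x) = Z.of_nat n ->
    exists l, chain dstep x l /\ chain (tight x) x l /\ last l x = z).
  { apply (H (Z.to_nat ((fst z - fst x) + (snd z - snd x)))); auto.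
    unfold le2 in Hxz; lia. }
  clear z Hxz. induction n as [|n IH]; intros z Hxz Hn.
  - exists []. simpl. split; [|split]; auto.
    destruct x, z; unfold le2 in *; simpl in *; f_equal; lia.
  - assert (Hzx : z <> x) by (intros ->; lia).
    destruct (tight_pred_exists x z Hxz Hzx) as (p & Hxp & Hpz & Htight).
    assert (Hp : (fst p - fst x) + (snd p - snd x) = Z.of_nat n).
    { unfold dstep, padd in Hpz. destruct Hpz as [-> | ->]; simpl in *; lia. }
    destruct (IH p Hxp Hp) as (l & Hl & Hlt & Hlast).
    exists (l ++ [z]). rewrite !chain_app, last_last, Hlast. simpl. tauto.
Qed.

Lemma lam_path_weight_dpath_le x y g :
  dpath x y g -> lam_path_weight w wH wV x y g <= L y - L x.
Proof.
  intros Hd. destruct (dpath_cons x y g Hd) as (l & -> & Hl & Hlast).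
  rewrite lam_path_weight_cons, lam_wt_self, <- Hlast.
  apply lam_path_weight_le; [exact Hl | unfold le2; lia |].
  rewrite Hlast. pose proof (dpath_le2 x y _ Hd). unfold le2 in *; lia.
Qed.

Lemma lam_path_weight_dpath_eq_iff x y l : dpath x y (x :: l) ->
  (lam_path_weight w wH wV x y (x :: l) = L y - L x <-> chain (tight x) x l).
Proof.
  intros Hd. destruct (dpath_cons x y _ Hd) as (l' & [= <-] & Hl & Hlast).
  rewrite lam_path_weight_cons, lam_wt_self, <- Hlast.
  apply lam_path_weight_eq_iff; [exact Hl | unfold le2; lia |].
  rewrite Hlast. pose proof (dpath_le2 x y _ Hd). unfold le2 in *; lia.
Qed.

Lemma lam_geodesic_iff x y l :
  dpath x y (x :: l) -> (lam_geodesic w wH wV x y (x :: l) <-> chain (tight x) x l).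
Proof.
  intros Hd. rewrite <- (lam_path_weight_dpath_eq_iff x y l Hd).
  split.
  - intros [_ Hopt].
    destruct (tight_path_exists x y (dpath_le2 x y _ Hd)) as (lt & Hlt & Htight & Hlast_t).
    pose proof (dpath_of_chain x y lt Hlt Hlast_t) as Hdt.
    specialize (Hopt _ Hdt).
    apply (lam_path_weight_dpath_eq_iff x y lt Hdt) in Htight.
    pose proof (lam_path_weight_dpath_le x y _ Hd). lia.
  - intros Heq. split; [exact Hd|]. intros g' Hd'.
    pose proof (lam_path_weight_dpath_le x y g' Hd'). lia.
Qed.

Lemma chain_tight_iff_max_pred x z l :
  chain dstep z l -> fst x < fst z -> snd x < snd z ->
  (chain (tight x) z l <-> chain max_pred z l).
Proof.
  revert z; induction l as [|b l IH]; intros z Hchain Hx1 Hx2; [simpl; tauto|].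
  destruct Hchain as [Hzb Hl].
  pose proof (dstep_le2 z b Hzb) as Hb. unfold le2 in Hb.
  simpl. rewrite (IH b Hl) by lia. unfold tight. intuition lia.
Qed.

Definition max_pred_path (z v : point) : Prop :=
  exists l, chain dstep z l /\ chain max_pred z l /\ last l z = v.

Lemma lam_pi_iff_max_pred_path x v z :
  fst x < fst z <= fst v -> snd x < snd z <= snd v ->
  (lam_pi w wH wV x v z <-> max_pred_path z v).
Proof.
  intros Hz1 Hz2. split.
  - intros (g & Hgeo & Hin). destruct (Hgeo) as [Hd _].
    destruct (dpath_cons x v g Hd) as (l & -> & Hl & Hlast).
    apply (lam_geodesic_iff x v l Hd) in Hgeo.
    destruct Hin as [-> | Hin]; [lia|].
    destruct (in_split z l Hin) as (l1 & l2 & ->).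
    pose proof (chain_suffix _ _ _ _ _ _ Hl) as Hl2.
    exists l2. split; [exact Hl2|]. split.
    + rewrite <- (chain_tight_iff_max_pred x z l2 Hl2) by lia.
      exact (chain_suffix _ _ _ _ _ _ Hgeo).
    + now rewrite last_app, last_cons in Hlast.
  - intros (l2 & Hl2 & Hmax & Hlast2).
    destruct (tight_path_exists x z ltac:(unfold le2; lia)) as (l1 & Hl1 & Htight & Hlast1).
    assert (Hd : dpath x v (x :: l1 ++ l2)).
    { apply dpath_of_chain; [|now rewrite last_app, Hlast1].
      apply chain_app. now rewrite Hlast1. }
    exists (x :: l1 ++ l2). split.
    + apply (lam_geodesic_iff x v _ Hd), chain_app. rewrite Hlast1.
      rewrite (chain_tight_iff_max_pred x z l2 Hl2) by lia. tauto.
    + rewrite <- Hlast1, app_comm_cons. apply in_or_app. left. apply last_In.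
Qed.

End Potential.

Theorem lemma3p5 (lam : R) (Hlam : (0 < lam < 1)%R)
  (w : point -> nat) (wH wV : point -> Z)
  (Henv : full_plane_env w wH wV)
  (u u' v : point) (Huv : plt u v) (Hu'v : plt u' v) :
  forall z : point,
    in_rect (padd u eplus) v z -> in_rect (padd u' eplus) v z ->
    (lam_pi w wH wV u v z <-> lam_pi w wH wV u' v z).
Proof.
  (* [lam] matters only through the law of the environment, which [Henv] already encodes. *)
  intros z Hz Hz'. destruct Henv as [L HL].
  unfold in_rect, padd, eplus in *; simpl in *.
  rewrite (lam_pi_iff_max_pred_path w wH wV L HL u v z) by lia.
  rewrite (lam_pi_iff_max_pred_path w wH wV L HL u' v z) by lia.
  reflexivity.
Qed.
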